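(* Let $2\le d\leq n+1$ and $0<t<t_{n,d}=\frac{d}{n+1}$. Then every point of $Z_1\cup Z_2$ is GIT$_t$-unstable. In particular, $\big((H_{n,d}\times H_{n,1})\setminus(Z_1\cup Z_2)\big)^{ss}_t=(H_{n,d}\times H_{n,1})^{ss}_t$.
   Context: $H_{n,d}=\mathbb P(H^0(\mathbb P^{n+1},\mathcal O(d)))$, $H_{n,1}$ the space of hyperplanes of $\mathbb P^{n+1}$; $G=\mathrm{SL}(n+2,\mathbb C)$ acts naturally on $H_{n,d}\times H_{n,1}$. For $a,b>0$ let $\mathcal O(a,b)=\pi_1^*\mathcal O_{H_{n,d}}(a)\otimes\pi_2^*\mathcal O_{H_{n,1}}(b)$ with its natural $G$-linearisation; for rational $t=b/a>0$, GIT$_t$-(semi)stability means GIT (semi)stability with respect to $\mathcal O(a,b)$, and $(\cdot)^{ss}_t$ denotes the GIT$_t$-semistable locus. $Z_1$ is the locus of $(p,l)$ with $\mathrm{Supp}\{l=0\}\subseteq\mathrm{Supp}\{p=0\}$; $Z_2$ is the locus of $(p,l)$ such that, with $X=\{p=0\}$, $H=\{l=0\}$, there is a hyperplane $H'\ne H$ with $X\cap H=X\cap H'$. *)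

From HB Require Import structures.
From mathcomp Require Import all_boot all_order all_algebra.
From mathcomp Require Import reals.
From mathcomp Require Import complex.
From mathcomp Require Import mpoly.

Set Implicit Arguments.
Unset Strict Implicit.
Unset Printing Implicit Defensive.

Import Order.TTheory GRing.Theory Num.Theory.
Local Open Scope ring_scope.

(* The complex numbers: R[i] for R a complete archimedean ordered field
   (R : realType is a model of the reals, so R[i] is a model of C). *)

Section GIT.
Variable (R : realType).
Local Notation C := (R[i]).
Variable (N : nat). (* N = n + 2 homogeneous coordinates on P^{n+1} *)

Local Notation P := {mpoly C[N]}.

(* A representative of a point of H_{n,d} = P(H^0(P^{n+1}, O(d))):
   a nonzero homogeneous polynomial of degree d (defined up to scalars). *)
Definition is_form (d : nat) (p : P) : Prop := p != 0 /\ p \is d.-homog.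

(* Natural (left) action of A in SL(N, C) on forms: (A . p)(x) = p(A^{-1} x). *)
Definition lin_subst (B : 'M[C]_N) : N.-tuple P :=
  [tuple \sum_(j < N) B i j *: 'X_j | i < N].
Definition act (A : 'M[C]_N) (p : P) : P := p \mPo lin_subst (invmx A).

(* Coordinates on H^0(O(d)): coefficients of the monomials of degree d. *)
Definition mons (d : nat) := {m : 'X_{1..N < d.+1} | mdeg (val m) == d}.
Definition coordk (d : nat) (k : 'I_#|{: mons d}|) (p : P) : C :=
  p@_(val (val (enum_val k))).

Definition eval_coords (d : nat)
    (Q : {mpoly C[#|{: mons d}| + #|{: mons 1}|]}) (p l : P) : C :=
  Q.@[fun i => match split i with
               | inl k => coordk k p
               | inr k => coordk k l
               end].

(* Q is bihomogeneous of bidegree (k1, k2) in the two groups of coordinates;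
   such Q are exactly the sections of O(k1, k2) on H_{n,d} x H_{n,1}. *)
Definition bihomog (d k1 k2 : nat)
    (Q : {mpoly C[#|{: mons d}| + #|{: mons 1}|]}) : Prop :=
  forall m, m \in msupp Q ->
    \sum_(i < #|{: mons d}|) m (lshift _ i) = k1 /\
    \sum_(j < #|{: mons 1}|) m (rshift _ j) = k2.

Definition sl_invariant (d : nat)
    (Q : {mpoly C[#|{: mons d}| + #|{: mons 1}|]}) : Prop :=
  forall (A : 'M[C]_N), \det A = 1 ->
  forall p l : P, p \is d.-homog -> l \is 1.-homog ->
    eval_coords Q (act A p) (act A l) = eval_coords Q p l.

(* GIT semistability of (p, l) w.r.t. O(a, b) with its natural
   linearisation: some invariant section of O(ma, mb), m > 0, does not
   vanish at (p, l). *)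
Definition git_semistable (d a b : nat) (p l : P) : Prop :=
  exists (m : nat) (Q : {mpoly C[#|{: mons d}| + #|{: mons 1}|]}),
    (0 < m)%N /\ bihomog (m * a) (m * b) Q /\ sl_invariant Q /\
    eval_coords Q p l != 0.

Definition git_unstable (d a b : nat) (p l : P) : Prop :=
  ~ git_semistable d a b p l.

(* Points of P^{n+1}: nonzero vectors (up to scalars). *)
Definition zero_set_pt (x : 'I_N -> C) (f : P) : Prop := f.@[x] = 0.

Definition Z1 (p l : P) : Prop :=
  forall x : 'I_N -> C, (exists i, x i != 0) -> l.@[x] = 0 -> p.@[x] = 0.

(* Z_2 : there is a hyperplane H' != H with X cap H = X cap H' (as sets). *)
Definition Z2 (p l : P) : Prop :=
  exists l' : P, is_form 1 l' /\ (~ exists c : C, l' = c *: l) /\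
    forall x : 'I_N -> C, (exists i, x i != 0) ->
      ((p.@[x] = 0 /\ l.@[x] = 0) <-> (p.@[x] = 0 /\ l'.@[x] = 0)).

End GIT.

From HB Require Import structures.
From mathcomp Require Import all_boot all_order all_algebra.
From mathcomp Require Import reals complex mpoly.
From mathcomp Require Import zify.
Import Order.TTheory GRing.Theory Num.Theory.
Local Open Scope ring_scope.
Set Implicit Arguments.
Unset Strict Implicit.
Unset Printing Implicit Defensive.

(* After a change of coordinates in SL(n+2) we may assume that l = g x_j and
   that p restricted to the hyperplane x_j = 0 is c x_k^d for some k <> j: for
   Z1 because x_j divides p (c = 0); for Z2 because X cap H = X cap H' with
   H' = {x_k = 0} says that p has no zero on H off x_k = 0, and a form on H
   without such zeros is a pure power of x_k.  Take the one-parameter subgroup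
   lambda(s) = diag(s^r_i) of SL(n+2) with r_j = Nd - d - 1, r_k = N - d - 1
   and r_i = -d - 1 otherwise (N = n + 2).  Every monomial of p then has weight
   >= 0 since d <= n + 1, and l has weight Nd - d - 1 > 0.  An invariant section
   Q of O(ma, mb) is constant along the orbit lambda(s).(p, l), yet as a
   function of s it is a polynomial without constant term, so Q(p, l) = 0:
   this is the easy half of the Hilbert-Mumford criterion. *)

(** * Polynomial functions *)

Section PolynomialFunctions.
Variable F : numDomainType.

Lemma poly_const_on_nonzero (u : {poly F}) c :
  (forall s : F, s != 0 -> u.[s] = c) -> u = c%:P.
Proof.
move=> uc; apply/eqP; rewrite -subr_eq0; apply/eqP.
apply: (@roots_geq_poly_eq0 _ _ [seq i.+1%:R | i <- iota 0 (size (u - c%:P))]).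
- by apply/allP => _ /mapP [i _ ->]; rewrite /root !hornerE uc ?subrr ?pnatr_eq0.
- by rewrite map_inj_uniq ?iota_uniq // => i j /eqP; rewrite eqr_nat => /eqP [].
- by rewrite size_map size_iota.
Qed.

Lemma base_digits_inj (B k : nat) (m1 m2 : 'I_k -> nat) :
  (forall i, m1 i < B)%N -> (forall i, m2 i < B)%N ->
  (\sum_(i < k) m1 i * B ^ i = \sum_(i < k) m2 i * B ^ i)%N -> m1 =1 m2.
Proof.
elim: k m1 m2 => [|k IH] m1 m2 lt1 lt2 + i; first by case: i.
have B_gt0 : (0 < B)%N by apply: leq_ltn_trans (lt1 ord0).
have shift (m : 'I_k.+1 -> nat) : (\sum_(i < k.+1) m i * B ^ i =
    m ord0 + B * \sum_(i < k) m (lift ord0 i) * B ^ i)%N.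
  rewrite big_ord_recl expn0 muln1 big_distrr; congr addn.
  by apply: eq_bigr => j _; rewrite lift0 expnS mulnCA.
rewrite !shift => E.
have E0 : m1 ord0 = m2 ord0.
  move/(congr1 (modn^~ B)): E.
  by rewrite ![(_ + B * _)%N]addnC ![(B * _)%N]mulnC !modnMDl !modn_small.
move: E; rewrite E0 => /addnI /eqP; rewrite eqn_pmul2l // => /eqP E.
have IHlift := IH _ _ (fun j => lt1 (lift ord0 j)) (fun j => lt2 (lift ord0 j)) E.
by case: (unliftP ord0 i) => [j ->|->]; [apply: IHlift | apply: E0].
Qed.

Lemma mpoly_eq0_of_meval (k : nat) (q : {mpoly F[k]}) :
  (forall x, q.@[x] = 0) -> q = 0.
Proof.
(* Kronecker substitution x_i := t^(B^i) sends the monomials of q to distinct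
   powers of t. *)
move=> q0; apply/eqP/negPn/negP => /negP q_neq0.
set B := msize q.
have digits_small m : m \in msupp q -> forall i, (m i < B)%N.
  move=> mq i; apply: leq_ltn_trans (msize_mdeg_lt mq).
  by rewrite mdegE (bigD1 i) //= leq_addr.
pose kron (m : 'X_{1..k}) := (\sum_(i < k) m i * B ^ i)%N.
pose U := \sum_(m <- msupp q) q@_m *: 'X^(kron m).
have U0 : U = 0.
  apply: poly_const_on_nonzero => t _.
  rewrite -(q0 (fun i => t ^+ (B ^ i))) mevalE horner_sum.
  apply: eq_bigr => m _; rewrite hornerZ hornerXn -prodrXr; congr (_ * _).
  by apply: eq_bigr => i _; rewrite -exprM mulnC.
have [m mq] : exists m, m \in msupp q.
  by case E: (msupp q) q_neq0 => [|m s]; [rewrite -msupp_eq0 E | exists m; rewrite inE eqxx].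
suff : U`_(kron m) = q@_m by rewrite U0 coef0 => /esym/eqP; apply/negP; rewrite -mcoeff_msupp.
rewrite /U coef_sumMXn big_mkcond (bigD1_seq m) ?msupp_uniq //= eqxx.
rewrite big1_seq ?addr0 // => m' /andP [m'_neq m'q]; case: eqP => // E.
by case/negP: m'_neq; apply/eqP/mnmP/(base_digits_inj (digits_small _ m'q) (digits_small _ mq)).
Qed.

End PolynomialFunctions.

Lemma meval_nowhere_zero_const (F : closedFieldType) (k : nat) (q : {mpoly F[k]}) :
  (forall x, q.@[x] != 0) -> forall x, q.@[x] = q.@[fun _ => 0].
Proof.
move=> q_neq0 x.
pose u := \sum_(e <- msupp q) q@_e *: \prod_i ((x i)%:P * 'X) ^+ e i.
have uE t : u.[t] = q.@[fun i => x i * t].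
  rewrite horner_sum mevalE; apply: eq_bigr => e _; rewrite hornerZ horner_prod.
  by congr (_ * _); apply: eq_bigr => i _; rewrite horner_exp hornerCM hornerX.
have /eq_leq/size1_polyC u_const : size u = 1%N.
  by apply/eqP/negPn/negP => /closed_rootP [t /rootP]; rewrite uE; apply/eqP.
have /meval_eq <- : (fun i => x i * 1) =1 x by move=> i; rewrite mulr1.
have /meval_eq <- : (fun i => x i * 0) =1 (fun _ => 0) by move=> i; rewrite mulr0.
by rewrite -!uE u_const !hornerC.
Qed.

Lemma meval_dhomog_scale (R : comNzRingType) (k d : nat) (p : {mpoly R[k]}) c x :
  p \is d.-homog -> p.@[fun i => c * x i] = c ^+ d * p.@[x].
Proof.
move=> /dhomog_mf p_homog; rewrite !mevalE mulr_sumr; apply: eq_big_seq => e ep.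
rewrite mulrCA; congr (_ * _).
by rewrite -(p_homog e ep) /= mdegE -prodrXr -big_split; apply: eq_bigr => i _; rewrite exprMn.
Qed.

Lemma mcoeff_msupp_sum (R : nzRingType) (k : nat) (p : {mpoly R[k]}) (P : pred 'X_{1..k})
    (f : 'X_{1..k} -> R) e :
  (\sum_(m <- msupp p | P m) f m *: 'X_[m])@_e = if (e \in msupp p) && P e then f e else 0.
Proof.
rewrite raddf_sum /=; under eq_bigr do rewrite mcoeffZ mcoeffX.
rewrite big_mkcond /=; case: (boolP (e \in msupp p)) => ep /=.
  rewrite (bigD1_seq e) ?msupp_uniq //= eqxx mulr1 big1 ?addr0 => [|m /negPf ->].
    by case: ifP.
  by case: ifP; rewrite ?mulr0.
rewrite big1_seq // => m /andP [_ mp]; case: ifP => // _.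
by case: eqP => [E|]; [move: ep; rewrite -E mp | rewrite mulr0].
Qed.

(** * Restriction to a coordinate hyperplane *)

Section DropVariable.
Variables (R : comNzRingType) (k : nat) (j : 'I_k).
Implicit Types (p : {mpoly R[k]}) (e : 'X_{1..k}).

Definition mdropX p : {mpoly R[k]} :=
  \sum_(e <- msupp p | e j == 0%N) p@_e *: 'X_[e].

Lemma mcoeff_mdropX p e : (mdropX p)@_e = if e j == 0%N then p@_e else 0.
Proof.
rewrite mcoeff_msupp_sum; case: (boolP (e \in msupp p)) => //= /memN_msupp_eq0 ->.
by rewrite if_same.
Qed.

Lemma meval_mdropX p x : (mdropX p).@[x] = p.@[fun i => if i == j then 0 else x i].
Proof.
rewrite raddf_sum /= [RHS]mevalE big_mkcond /=; apply: eq_bigr => e _.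
case: ifP => [/eqP ej | ej]; last by rewrite (bigD1 j) //= eqxx expr0n ej mul0r mulr0.
rewrite mevalZ mevalX; congr (_ * _); apply: eq_bigr => i _.
by case: eqP => [->|//]; rewrite ej !expr0.
Qed.

Lemma mdropX_dhomog d p : p \is d.-homog -> mdropX p \is d.-homog.
Proof.
move=> /dhomog_mf p_homog; rewrite /mdropX big_seq_cond; apply: rpred_sum => e /andP [ep _].
by apply: rpredZ; rewrite dhomogX /= p_homog.
Qed.

End DropVariable.

Lemma mdropX_eq0_of_vanishing (F : numDomainType) (k d : nat) (p : {mpoly F[k]}) j :
  (0 < d)%N -> p \is d.-homog ->
  (forall x, (exists i, x i != 0) -> x j = 0 -> p.@[x] = 0) -> mdropX j p = 0.
Proof.
move=> d_gt0 p_homog p_vanish; apply: mpoly_eq0_of_meval => x.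
rewrite meval_mdropX; pose y i := if i == j then 0 else x i.
case: (pickP (fun i => y i != 0)) => [i yi | y0].
  by apply: (p_vanish y (ex_intro _ i yi)); rewrite /y eqxx.
have /meval_eq -> : y =1 (fun i => 0 * y i) by move=> i; move/negbFE/eqP: (y0 i) ->; rewrite mul0r.
by rewrite (meval_dhomog_scale _ _ p_homog) expr0n gtn_eqF // mul0r.
Qed.

Lemma mdropX_pure_power (F : numClosedFieldType) (k d : nat) (p : {mpoly F[k]}) j l :
  l != j -> p \is d.-homog ->
  (forall x, x j = 0 -> x l = 1 -> p.@[x] != 0) ->
  exists c, mdropX j p = c *: 'X_l ^+ d.
Proof.
(* Dehomogenising at x_l = 1 gives a nowhere vanishing, hence constant,
   polynomial c; by homogeneity q = c x_l^d wherever x_l <> 0. *)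
move=> lj p_homog p_neq0; set q := mdropX j p.
have q_homog : q \is d.-homog := mdropX_dhomog j p_homog.
pose dehomog := q \mPo [tuple if i == l then 1 else 'X_i | i < k].
have dehomogE x : dehomog.@[x] = q.@[fun i => if i == l then 1 else x i].
  rewrite comp_mpoly_meval; apply: meval_eq => i; rewrite tnth_mktuple.
  by case: eqP; rewrite ?meval1 ?mevalXU.
pose c := dehomog.@[fun _ => 0].
have dehomog_const : forall x, dehomog.@[x] = c.
  apply: meval_nowhere_zero_const => x; rewrite dehomogE meval_mdropX.
  by apply: p_neq0; rewrite ?eqxx // (negPf lj).
have qE x : x l != 0 -> q.@[x] = c * x l ^+ d.
  move=> xl; pose y i := (x l)^-1 * x i.
  have /meval_eq -> : x =1 (fun i => x l * y i) by move=> i; rewrite /y mulVKf.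
  rewrite (meval_dhomog_scale _ _ q_homog) mulrC -(dehomog_const y) dehomogE.
  by congr (_ * _); apply: meval_eq => i; case: eqP => // ->; rewrite /y mulVf.
have X_neq0 : ('X_l : {mpoly F[k]}) != 0.
  by apply/eqP => /(congr1 (mcoeff U_(l))); rewrite mcoeffXU eqxx mcoeff0; apply/eqP/oner_neq0.
exists c; apply: (mulIf X_neq0); apply/eqP; rewrite -subr_eq0 -mulrBl.
apply/eqP/mpoly_eq0_of_meval => x; rewrite mevalM mevalB mevalZ rmorphXn /= !mevalXU.
by have [->|/qE ->] := eqVneq (x l) 0; rewrite ?mulr0 // subrr mul0r.
Qed.

Lemma mdropX_pure_power_msupp (R : comNzRingType) (k d : nat) (p : {mpoly R[k]}) j l c e :
  mdropX j p = c *: 'X_l ^+ d -> e \in msupp p -> e j = 0%N -> e l = d.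
Proof.
move=> pE ep ej; have := mcoeff_mdropX j p e; rewrite ej eqxx pE mpolyXn mcoeffZ mcoeffX.
case: eqP => [<-|_ /esym/eqP]; first by rewrite mulmnE mnm1E eqxx mul1n.
by rewrite mulr0 mcoeff_eq0 ep.
Qed.

(** * Normal forms of linear forms under SL *)

Section RowReduction.
Variables (F : fieldType) (N : nat).
Implicit Types (a v : 'rV[F]_N) (M : 'M[F]_N).

Lemma row_clear a j : a 0 j != 0 ->
  exists2 T : 'M[F]_N, T \in unitmx &
    a *m T = a 0 j *: 'e_j /\ forall v, v 0 j = 0 -> v *m T = v.
Proof.
move=> aj; pose u := 'e_j - (a 0 j)^-1 *: a.
have uj : u 0 j = 0 by rewrite !mxE !eqxx /= mulVf // subrr.
pose T (w : 'rV[F]_N) : 'M[F]_N := 1%:M + delta_mx j 0 *m w.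
have mulT v w : v *m T w = v + v 0 j *: w.
  by rewrite mulmxDr mulmx1 mulmxA -colE (mx11_scalar (col j v)) mul_scalar_mx mxE.
have colu : col j u = 0 by apply/rowP => i; rewrite [LHS]mxE uj mxE.
have T_unit : T u \in unitmx.
  suff /mulmx1_unit [] : T u *m T (- u) = 1%:M by [].
  rewrite /T mulmxDr mulmx1 mulmxDl mul1mx mulmxA -[delta_mx j 0 *m u *m _]mulmxA.
  by rewrite -mulmxA -colE colu mul0mx mulmx0 addr0 mulmxN addrK.
exists (T u) => //; split => [|v vj]; last by rewrite mulT vj scale0r addr0.
by rewrite mulT scalerBr scalerA mulfV // scale1r addrC subrK.
Qed.

Definition rescale_col j c : 'M[F]_N := diag_mx (\row_i (if i == j then c else 1)).

Lemma det_rescale_col j c : \det (rescale_col j c) = c.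
Proof.
rewrite det_diag (bigD1 j) //= mxE eqxx big1 ?mulr1 // => i /negPf ij.
by rewrite mxE ij.
Qed.

Lemma rescale_col_delta j c i :
  ('e_i : 'rV[F]_N) *m rescale_col j c = (if i == j then c else 1) *: 'e_i.
Proof. by rewrite -rowE row_diag_mx mxE. Qed.

Lemma row_normal_form1 a : a != 0 ->
  exists M j g, [/\ \det M = 1, g != 0 & a *m M = g *: 'e_j].
Proof.
move=> a_neq0; have [j aj] : exists j, a 0 j != 0.
  apply/existsP; apply: contraNT a_neq0 => /existsPn a0.
  by apply/eqP/rowP => i; rewrite mxE; apply/eqP; move/negPn: (a0 i).
have [T T_unit [aT _]] := row_clear aj.
have detT : \det T != 0 by rewrite -unitfE -unitmxE.
exists (T *m rescale_col j (\det T)^-1), j, (a 0 j * (\det T)^-1).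
rewrite det_mulmx det_rescale_col mulfV // mulf_neq0 ?invr_eq0 //.
by rewrite mulmxA aT -scalemxAl rescale_col_delta eqxx scalerA.
Qed.

Lemma row_normal_form2 a a' : a != 0 -> (forall c, a' != c *: a) ->
  exists M j k g b,
    [/\ \det M = 1, k != j, b != 0, a *m M = g *: 'e_j & a' *m M = b *: 'e_k].
Proof.
move=> /row_normal_form1 [M1 [j [g [detM1 g_neq0 aM1]]]] not_prop.
have M1_unit : M1 \in unitmx by rewrite unitmxE detM1 unitr1.
move def_b : (a' *m M1) => b.
have [k /andP [kj bk]] : exists k, (k != j) && (b 0 k != 0).
  apply/existsP; apply: contraT => /existsPn b0.
  suff E : a' = b 0 j / g *: a by move: (not_prop (b 0 j / g)); rewrite E eqxx.
  have b_e : b = b 0 j *: 'e_j.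
    apply/rowP => i; rewrite !mxE eqxx /=; case: eqP => [->|/eqP ij]; first by rewrite mulr1.
    by rewrite mulr0; move: (b0 i); rewrite ij /= negbK => /eqP.
  rewrite -(mulmxK M1_unit a) -(mulmxK M1_unit a') def_b [in LHS]b_e aM1 -!scalemxAl scalerA.
  by rewrite divfK.
have [T2 T2_unit [bT2 T2_fix]] := row_clear bk.
have detT2 : \det T2 != 0 by rewrite -unitfE -unitmxE.
exists (M1 *m T2 *m rescale_col j (\det T2)^-1), j, k, (g * (\det T2)^-1), (b 0 k).
rewrite !det_mulmx detM1 det_rescale_col mul1r mulfV //; split => //.
  rewrite !mulmxA aM1 -!scalemxAl T2_fix ?mxE ?eqxx ?(negPf kj) ?andbF //.
  by rewrite rescale_col_delta eqxx scalerA.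
by rewrite !mulmxA def_b bT2 -scalemxAl rescale_col_delta (negPf kj) scale1r.
Qed.

Lemma unitmx_apply_neq0 M (x : 'I_N -> F) : M \in unitmx ->
  (exists i, x i != 0) -> exists i, \sum_j M i j * x j != 0.
Proof.
move=> M_unit [i0 xi0]; apply/existsP; apply: contraT => /existsPn Mx0.
case/negP: xi0; pose X := \col_i x i.
have MX0 : M *m X = 0.
  apply/colP => i; rewrite !mxE; apply: etrans (eqP (negPn (Mx0 i))).
  by apply: eq_bigr => j _; rewrite mxE.
move/(congr1 (mulmx (invmx M))): MX0; rewrite mulKmx // mulmx0 => /colP/(_ i0).
by rewrite !mxE => ->.
Qed.

End RowReduction.

Lemma comp_mpolyA (R : comNzRingType) (k1 k2 k3 : nat) (p : {mpoly R[k1]})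
    (t : k1.-tuple {mpoly R[k2]}) (u : k2.-tuple {mpoly R[k3]}) :
  (p \mPo t) \mPo u = p \mPo [tuple tnth t i \mPo u | i < k1].
Proof.
rewrite [p \mPo t]comp_mpolyEX [RHS]comp_mpolyEX raddf_sum; apply: eq_bigr => m _ /=.
rewrite comp_mpolyZ !comp_mpolyX rmorph_prod; congr (_ *: _).
by apply: eq_bigr => i _; rewrite rmorphXn tnth_mktuple.
Qed.

Section LinearForms.
Variables (R : comNzRingType) (N : nat).
Implicit Types (a : 'rV[R]_N) (l : {mpoly R[N]}).

Definition linform a : {mpoly R[N]} := \sum_i a 0 i *: 'X_i.

Lemma meval_linform a x : (linform a).@[x] = \sum_i a 0 i * x i.
Proof. by rewrite raddf_sum; apply: eq_bigr => i _; rewrite /= mevalZ mevalXU. Qed.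

Lemma linform_delta (g : R) j : linform (g *: 'e_j) = g *: 'X_j.
Proof.
rewrite /linform (bigD1 j) //= big1 => [|i /negPf ij]; last by rewrite !mxE ij mulr0 scale0r.
by rewrite !mxE !eqxx mulr1 addr0.
Qed.

Lemma linformZ (c : R) a : linform (c *: a) = c *: linform a.
Proof. by rewrite scaler_sumr; apply: eq_bigr => i _; rewrite mxE scalerA. Qed.

Lemma linform0 : linform 0 = 0.
Proof. by rewrite -(scale0r 0) linformZ scale0r. Qed.

Lemma dhomog1_linform l : l \is 1.-homog -> l = linform (\row_i l@_U_(i)).
Proof.
move=> l_homog; apply/mpolyP => m; rewrite raddf_sum /=.
under eq_bigr do rewrite mcoeffZ mcoeffX mxE.
have [/eqP/mdeg1P [i /eqP ->]|m_ndeg1] := eqVneq (mdeg m) 1%N.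
  rewrite (bigD1 i) //= eqxx mulr1 big1 ?addr0 // => i' i'i.
  by rewrite eq_mnm1 (negPf i'i) mulr0.
rewrite (dhomog_nemf_coeff l_homog m_ndeg1) big1 // => i _.
by case: eqP => [mi|]; [move: m_ndeg1; rewrite -mi mdeg1 eqxx | rewrite mulr0].
Qed.

End LinearForms.

Section LinearSubstitution.
Variables (R : realType) (N : nat).
Local Notation C := R[i].
Local Notation P := {mpoly C[N]}.
Implicit Types (a : 'rV[C]_N) (A B M : 'M[C]_N) (p l : P).

Lemma tnth_lin_subst B i : tnth (lin_subst B) i = linform (row i B).
Proof. by rewrite tnth_mktuple; apply: eq_bigr => j _; rewrite mxE. Qed.

Lemma meval_lin_subst p B x :
  (p \mPo lin_subst B).@[x] = p.@[fun i => \sum_j B i j * x j].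
Proof.
rewrite comp_mpoly_meval; apply: meval_eq => i.
by rewrite tnth_lin_subst meval_linform; apply: eq_bigr => j _; rewrite mxE.
Qed.

Lemma linform_lin_subst a B : linform a \mPo lin_subst B = linform (a *m B).
Proof.
rewrite raddf_sum /=.
under eq_bigr => i _ do rewrite comp_mpolyZ comp_mpolyXU -tnth_nth tnth_lin_subst scaler_sumr.
rewrite exchange_big /=; apply: eq_bigr => j _.
by rewrite mxE scaler_suml; apply: eq_bigr => i _; rewrite scalerA mxE.
Qed.

Lemma lin_substM A B :
  lin_subst (A *m B) = [tuple tnth (lin_subst A) i \mPo lin_subst B | i < N].
Proof.
apply: eq_from_tnth => i.
by rewrite tnth_mktuple !tnth_lin_subst linform_lin_subst row_mul.
Qed.

Lemma act_invmx_mulmx A B p :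
  act (invmx (A *m B)) p = (p \mPo lin_subst A) \mPo lin_subst B.
Proof. by rewrite /act invmxK lin_substM comp_mpolyA. Qed.

Lemma lin_subst_dhomog d p B : p \is d.-homog -> p \mPo lin_subst B \is d.-homog.
Proof.
move=> /dhomog_mf p_homog; rewrite comp_mpolyEX big_seq; apply: rpred_sum => m mp.
rewrite rpredZ // comp_mpolyX -(p_homog m mp) /= mdegE.
apply: (big_rec2 (fun (d : nat) (q : P) => q \is d.-homog)) => [|i d' q _ q_homog].
  exact: dhomog1.
have -> : (m i + d' = 1 * m i + d')%N by rewrite mul1n.
apply: dhomogM q_homog; apply: dhomogMn.
rewrite tnth_lin_subst; apply: rpred_sum => j _; apply: rpredZ.
by rewrite dhomogX /= mdeg1.
Qed.

Lemma form1_linform l :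
  is_form 1 l -> exists2 a, a != 0 & l = linform a.
Proof.
move=> [l_neq0 /dhomog1_linform lE]; exists (\row_i l@_U_(i)) => //.
by apply: contraNneq l_neq0 => a0; rewrite lE a0 linform0.
Qed.

End LinearSubstitution.

(** * One-parameter subgroups *)

Lemma prodr_exprz (F : fieldType) (I : finType) (s : F) (f : I -> int) (g : I -> nat) :
  s != 0 -> \prod_i (s ^ f i) ^+ g i = s ^ (\sum_i f i * (g i)%:Z).
Proof.
move=> s_neq0; apply: (big_rec2 (fun x z => x = s ^ z)) => [|i _ z _ ->].
  by rewrite expr0z.
by rewrite exprnP exprz_exp expfzDr.
Qed.

Lemma meval_scale_exprz (F : fieldType) (k : nat) (Q : {mpoly F[k]}) v
    (rho : 'I_k -> int) (s : F) : s != 0 ->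
  Q.@[fun i => v i * s ^ rho i] =
  \sum_(mu <- msupp Q) Q@_mu * \prod_i v i ^+ mu i * s ^ (\sum_i rho i * (mu i)%:Z).
Proof.
move=> s_neq0; rewrite mevalE; apply: eq_bigr => mu _.
by rewrite -mulrA -prodr_exprz // -big_split; congr (_ * _); apply: eq_bigr => i _; rewrite exprMn.
Qed.

Lemma laurent_const_eq0 (F : numFieldType) (I : eqType) (r : seq I) (c : I -> F)
    (E : I -> int) c0 :
  (forall i, i \in r -> c i != 0 -> 0 < E i) ->
  (forall s, s != 0 -> \sum_(i <- r) c i * s ^ E i = c0) -> c0 = 0.
Proof.
move=> E_gt0 c0E; pose U := \sum_(i <- r) c i *: 'X^`|E i|.
have -> : c0 = U`_0.
  suff -> : U = c0%:P by rewrite coefC.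
  apply: poly_const_on_nonzero => s s_neq0; rewrite -(c0E s s_neq0) horner_sum.
  apply: eq_big_seq => i ir; rewrite hornerZ hornerXn.
  have [->|ci] := eqVneq (c i) 0; first by rewrite !mul0r.
  by rewrite exprnP abszE gtr0_norm ?E_gt0.
rewrite coef_sumMXn big1_seq // => i /andP [/eqP Ei0 ir].
by apply/eqP; apply: contraT => /(E_gt0 i ir); rewrite lt0r -absz_eq0 Ei0.
Qed.

Lemma weighted_sum_split_ge (K1 K2 A1 A2 : nat) (mu : 'I_(K1 + K2) -> nat)
    (rho : 'I_(K1 + K2) -> int) (al be : int) :
  (\sum_i mu (lshift K2 i))%N = A1 -> (\sum_i mu (rshift K1 i))%N = A2 ->
  (forall i, (0 < mu (lshift K2 i))%N -> al <= rho (lshift K2 i)) ->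
  (forall i, (0 < mu (rshift K1 i))%N -> be <= rho (rshift K1 i)) ->
  A1%:Z * al + A2%:Z * be <= \sum_i rho i * (mu i)%:Z.
Proof.
have block_ge K (f : 'I_K -> 'I_(K1 + K2)) A w : (\sum_i mu (f i))%N = A ->
    (forall i, (0 < mu (f i))%N -> w <= rho (f i)) ->
    A%:Z * w <= \sum_i rho (f i) * (mu (f i))%:Z.
  move=> <- w_le; rewrite raddf_sum mulr_suml; apply: ler_sum => i _.
  rewrite mulrC; have [->|mu_gt0] := posnP (mu (f i)); first by rewrite !mulr0.
  by rewrite ler_wpM2r // w_le.
by move=> *; rewrite big_split_ord lerD // block_ge.
Qed.

Section OneParameterSubgroups.
Variables (R : realType) (N : nat).
Local Notation C := R[i].
Local Notation P := {mpoly C[N]}.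
Implicit Types (p l : P) (r : 'I_N -> int) (s : C).

Definition mweight r (e : 'X_{1..N}) : int := \sum_i r i * (e i)%:Z.

Definition onepar r s : 'M[C]_N := diag_mx (\row_i s ^ r i).

Lemma mcoeff_lin_subst_diag p (w : 'rV[C]_N) e :
  (p \mPo lin_subst (diag_mx w))@_e = p@_e * \prod_i w 0 i ^+ e i.
Proof.
have termE m : p@_m *: ('X_[m] \mPo lin_subst (diag_mx w)) =
    (p@_m * \prod_i w 0 i ^+ m i) *: 'X_[m].
  rewrite comp_mpolyX mpolyXE_id -scalerA -scaler_prod; congr (_ *: _).
  by apply: eq_bigr => i _; rewrite tnth_lin_subst row_diag_mx linform_delta exprZn.
rewrite comp_mpolyEX (eq_bigr _ (fun m _ => termE m)).
rewrite (mcoeff_msupp_sum p xpredT (fun m => p@_m * _)) andbT.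
by case: ifP => // /negbT /memN_msupp_eq0 ->; rewrite mul0r.
Qed.

Lemma coordk_onepar d (k : 'I_#|{: mons N d}|) p r s : s != 0 ->
  coordk k (p \mPo lin_subst (onepar r s)) =
  coordk k p * s ^ mweight r (val (val (enum_val k))).
Proof.
move=> s_neq0; rewrite /coordk mcoeff_lin_subst_diag -prodr_exprz //.
by congr (_ * _); apply: eq_bigr => i _; rewrite mxE.
Qed.

Lemma det_onepar r s : s != 0 -> \sum_i r i = 0 -> \det (onepar r s) = 1.
Proof.
move=> s_neq0 r0; rewrite det_diag (eq_bigr (fun i => (s ^ r i) ^+ 1%N)) => [|i _].
  by rewrite prodr_exprz // (eq_bigr r) => [|i _]; rewrite ?r0 ?expr0z // mulr1.
by rewrite mxE expr1.
Qed.

Lemma eval_coords_onepar_eq0 d A1 A2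
    (Q : {mpoly C[#|{: mons N d}| + #|{: mons N 1}|]}) p l r (al be : int) c :
  bihomog A1 A2 Q ->
  {in msupp p, forall e, al <= mweight r e} ->
  {in msupp l, forall e, be <= mweight r e} ->
  0 < A1%:Z * al + A2%:Z * be ->
  (forall s, s != 0 -> eval_coords Q (p \mPo lin_subst (onepar r s))
                                     (l \mPo lin_subst (onepar r s)) = c) ->
  c = 0.
Proof.
move=> Q_bihomog p_wt l_wt wt_gt0 Q_const.
pose v (i : 'I_(#|{: mons N d}| + #|{: mons N 1}|)) :=
  match split i with inl k => coordk k p | inr k => coordk k l end.
pose rho (i : 'I_(#|{: mons N d}| + #|{: mons N 1}|)) :=
  match split i with
  | inl k => mweight r (val (val (enum_val k)))
  | inr k => mweight r (val (val (enum_val k))) end.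
apply: (@laurent_const_eq0 _ _ (msupp Q) (fun mu => Q@_mu * \prod_i v i ^+ mu i)
  (fun mu => \sum_i rho i * (mu i)%:Z)) => [mu muQ cmu|s s_neq0].
  have v_neq0 i : (0 < mu i)%N -> v i != 0.
    move=> mu_gt0; apply: contraNneq cmu => vi0.
    by rewrite (bigD1 i) //= vi0 expr0n gtn_eqF // mul0r mulr0.
  have [A1E A2E] := Q_bihomog mu muQ.
  apply: (lt_le_trans wt_gt0); apply: weighted_sum_split_ge A1E A2E _ _ => i /v_neq0.
    by rewrite /v /rho (unsplitK (inl _)) -mcoeff_msupp => /p_wt.
  by rewrite /v /rho (unsplitK (inr _)) -mcoeff_msupp => /l_wt.
rewrite -(Q_const s s_neq0) -meval_scale_exprz //; apply: meval_eq => i.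
by rewrite /v /rho; case: (split i) => k; rewrite coordk_onepar.
Qed.

End OneParameterSubgroups.

(** * The destabilising subgroup *)

Section DestabilisingSubgroup.
Variables (R : realType) (n d : nat).
Local Notation N := n.+2.
Local Notation C := R[i].
Local Notation P := {mpoly C[N]}.
Implicit Types (p l : P) (j k : 'I_N).

Definition pure_power_section p l : Prop :=
  exists M j k (g c : C), [/\ \det M = 1, k != j, l \mPo lin_subst M = g *: 'X_j
    & mdropX j (p \mPo lin_subst M) = c *: 'X_k ^+ d].

Lemma Z1_pure_power_section p l :
  (0 < d)%N -> is_form d p -> is_form 1 l -> Z1 p l -> pure_power_section p l.
Proof.
move=> d_gt0 [_ p_homog] /form1_linform [a a_neq0 lE] Z1pl.
have [M [j [g [detM _ aM]]]] := row_normal_form1 a_neq0.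
have M_unit : M \in unitmx by rewrite unitmxE detM unitr1.
exists M, j, (lift j ord0), g, 0; split => //; first by rewrite eq_sym neq_lift.
  by rewrite lE linform_lin_subst aM linform_delta.
rewrite scale0r; apply: mdropX_eq0_of_vanishing d_gt0 (lin_subst_dhomog M p_homog) _.
move=> x x_neq0 xj; rewrite meval_lin_subst; apply: Z1pl; first exact: unitmx_apply_neq0.
by rewrite -meval_lin_subst lE linform_lin_subst aM linform_delta mevalZ mevalXU xj mulr0.
Qed.

Lemma Z2_pure_power_section p l :
  is_form d p -> is_form 1 l -> Z2 p l -> pure_power_section p l.
Proof.
move=> [_ p_homog] /form1_linform [a a_neq0 lE] [l' [/form1_linform [a' _ l'E] [not_prop Z2pl]]].
have not_prop' c : a' != c *: a.
  by apply/eqP => a'E; apply: not_prop; exists c; rewrite l'E lE a'E linformZ.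
have [M [j [k [g [b [detM kj b_neq0 aM a'M]]]]]] := row_normal_form2 a_neq0 not_prop'.
have M_unit : M \in unitmx by rewrite unitmxE detM unitr1.
have lM : l \mPo lin_subst M = g *: 'X_j by rewrite lE linform_lin_subst aM linform_delta.
have l'M : l' \mPo lin_subst M = b *: 'X_k by rewrite l'E linform_lin_subst a'M linform_delta.
have [c pM] : exists c, mdropX j (p \mPo lin_subst M) = c *: 'X_k ^+ d.
  apply: (mdropX_pure_power kj (lin_subst_dhomog M p_homog)) => x xj xk.
  apply/eqP; rewrite meval_lin_subst => pMx.
  have x_neq0 : exists i, x i != 0 by exists k; rewrite xk oner_neq0.
  have lMx : l.@[fun i => \sum_j M i j * x j] = 0.
    by rewrite -meval_lin_subst lM mevalZ mevalXU xj mulr0.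
  have [_ /eqP] := (Z2pl _ (unitmx_apply_neq0 M_unit x_neq0)).1 (conj pMx lMx).
  by rewrite -meval_lin_subst l'M mevalZ mevalXU xk mulr1 (negPf b_neq0).
by exists M, j, k, g, c.
Qed.
Definition destab_weight j k (i : 'I_N) : int :=
  (N * d * (i == j) + N * (i == k))%N%:Z - d.+1%:Z.

Lemma sum_destab_weight j k : \sum_i destab_weight j k i = 0.
Proof.
have delta_sum i0 : (\sum_(i < N) (i == i0) = 1)%N.
  by rewrite (bigD1 i0) //= eqxx big1 // => i /negPf ->.
have sum_nat : (\sum_i (N * d * (i == j) + N * (i == k)) = N * d + N)%N.
  by rewrite big_split /= -!big_distrr /= !delta_sum !muln1.
rewrite sumrB sumr_const card_ord -raddf_sum /= sum_nat -mulr_natr natz; lia.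
Qed.


Lemma mweight_destab j k e :
  mweight (destab_weight j k) e = (N * d * e j + N * e k)%N%:Z - (d.+1 * mdeg e)%N%:Z.
Proof.
have delta_sum i0 : (\sum_(i < N) (i == i0) * e i = e i0)%N.
  by rewrite (bigD1 i0) //= eqxx mul1n big1 ?addn0 // => i /negPf ->.
have termE i : destab_weight j k i * (e i)%:Z =
    ((N * d * (i == j) + N * (i == k)) * e i)%N%:Z - (d.+1 * e i)%N%:Z.
  by rewrite mulrBl -!PoszM.
rewrite /mweight (eq_bigr _ (fun i _ => termE i)) sumrB -!raddf_sum /= mdegE big_distrr /=.
congr (Posz _ - _); rewrite (eq_bigr _ (fun i _ => mulnDl _ _ _)) big_split /=.
by congr addn; rewrite -delta_sum big_distrr /=; apply: eq_bigr => i _; rewrite mulnA.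
Qed.

Lemma pure_power_section_unstable a b p l :
  (2 <= d)%N -> (d <= n.+1)%N -> (0 < b)%N -> p \is d.-homog -> l \is 1.-homog ->
  pure_power_section p l -> git_unstable d a b p l.
Proof.
move=> d_ge2 d_le b_gt0 p_homog l_homog [M [j [k [g [c [detM kj lM pM]]]]]].
move=> [m [Q [m_gt0 [Q_bihomog [Q_inv /eqP[]]]]]].
apply: (eval_coords_onepar_eq0 (p := p \mPo lin_subst M) (l := g *: 'X_j)
  (r := destab_weight j k) (al := 0) (be := 1) Q_bihomog).
- move=> e ep; rewrite mweight_destab (dhomog_mf (lin_subst_dhomog M p_homog) ep) /=.
  rewrite subr_ge0 lez_nat; have [ej|ej] := posnP (e j); last by nia.
  by rewrite ej (mdropX_pure_power_msupp pM ep ej); nia.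
- move=> e; rewrite mcoeff_msupp mcoeffZ mcoeffX.
  have [<- _|_] := eqVneq U_(j)%MM e; last by rewrite mulr0 eqxx.
  rewrite mweight_destab mdeg1 !mnm1E eqxx eq_sym (negPf kj) lerBrDr -PoszD lez_nat; nia.
- by rewrite mulr0 add0r mulr1 ltz_nat muln_gt0 m_gt0.
move=> s s_neq0; rewrite -lM -!act_invmx_mulmx; apply: Q_inv => //.
by rewrite det_inv det_mulmx detM mul1r det_onepar ?sum_destab_weight ?invr1.
Qed.

End DestabilisingSubgroup.

Theorem lemma3p6 (R : realType) (n d a b : nat) :
  (2 <= d)%N -> (d <= n.+1)%N ->
  (* t = b / a with a, b > 0 and 0 < t < t_{n,d} = d / (n+1) *)
  (0 < a)%N -> (0 < b)%N -> (b * n.+1 < d * a)%N ->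
  (forall p l : {mpoly R[i][n.+2]}, is_form d p -> is_form 1 l ->
     Z1 p l \/ Z2 p l -> git_unstable d a b p l) /\
  (forall p l : {mpoly R[i][n.+2]}, is_form d p -> is_form 1 l ->
     ((~ (Z1 p l \/ Z2 p l)) /\ git_semistable d a b p l) <->
     git_semistable d a b p l).
Proof.
(* The weights of the destabilising subgroup do not depend on t. *)
move=> d_ge2 d_le _ b_gt0 _.
have unstable (p l : {mpoly R[i][n.+2]}) : is_form d p -> is_form 1 l ->
    Z1 p l \/ Z2 p l -> git_unstable d a b p l.
  move=> p_form l_form Z.
  apply: (pure_power_section_unstable d_ge2 d_le b_gt0 p_form.2 l_form.2).
  case: Z => [/Z1_pure_power_section|/Z2_pure_power_section]; apply=> //.
  exact: leq_trans d_ge2.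
split=> // p l p_form l_form; split=> [[] //|ss]; split=> // Z.
exact: unstable p l p_form l_form Z ss.
Qed.
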